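(* For integers $j\ge 2$ let \[ I(j)=\left\lfloor \frac{1}{1+\sum_{k=2}^{j-1}\left\lfloor \frac{\gcd(k,j)}{k}\right\rfloor}\right\rfloor,\qquad S(i)=\sum_{j=2}^{i} I(j)\ (i\ge 1), \] and for integers $i\ge 1$, $x\ge 0$ let $A(i,x)=\left\lfloor \frac{1}{1+\lfloor S(i)/(x+1)\rfloor}\right\rfloor$. Then for all integers $x\ge 0$ and $i\ge 1$, $A(i,x)=1$ if $\pi(i)\le x$ and $A(i,x)=0$ otherwise.
   Context: $\pi(i)$ is the prime counting function. $\lfloor\cdot\rfloor$ is the floor function; empty sums are $0$. *)

(* All quantities are nonnegative integers, so every
   floor of a quotient of naturals is nat Euclidean division %/ . *)
From mathcomp Require Import all_boot.
Set Implicit Arguments. Unset Strict Implicit. Unset Printing Implicit Defensive.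

Definition prime_pi (i : nat) : nat := count prime (iota 0 i.+1).

Definition I_fun (j : nat) : nat :=
  1 %/ (1 + \sum_(2 <= k < j) (gcdn k j %/ k)).

Definition S_fun (i : nat) : nat := \sum_(2 <= j < i.+1) I_fun j.

Definition A_fun (i x : nat) : nat := 1 %/ (1 + S_fun i %/ (x + 1)).

(* Since 0 < k, gcd(k, j) / k is 1 if k divides j and 0 otherwise, so the inner
   sum of I(j) counts the divisors of j in [2, j), and I(j) = 1 exactly when j is
   prime. Hence S(i) = pi(i), and A(i, x) = 1 iff floor(pi(i) / (x + 1)) = 0. *)
From mathcomp Require Import all_boot.

Lemma div1_add1n (n : nat) : 1 %/ (1 + n) = (n == 0).
Proof. by case: n => [|n] //=; rewrite divn_small. Qed.

Lemma divn_eq0 (m d : nat) : 0 < d -> (m %/ d == 0) = (m < d).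
Proof. by move=> d_gt0; rewrite -leqn0 leqNgt divn_gt0 // -ltnNge. Qed.

Lemma divn_gcdn_dvdn (k j : nat) : 0 < k -> gcdn k j %/ k = (k %| j).
Proof.
move=> k_gt0; have [/gcdn_idPl-> | ndvd_kj] := boolP (k %| j).
  by rewrite divnn k_gt0.
rewrite divn_small // ltn_neqAle dvdn_leq ?dvdn_gcdl // andbT.
by apply: contra ndvd_kj => /eqP <-; rewrite dvdn_gcdr.
Qed.

Lemma prime_sum_dvdn_eq0 (j : nat) :
  1 < j -> prime j = (\sum_(2 <= k < j) (k %| j) == 0).
Proof.
move=> j_gt1; rewrite sum_nat_seq_eq0; apply/idP/allP.
- move=> /primeP[_ prime_j] k; rewrite mem_index_iota => /andP[k_gt1 k_lt_j].
  rewrite /= eqb0; apply/negP => /prime_j /orP[] /eqP k_eq.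
    by rewrite k_eq in k_gt1.
  by rewrite k_eq ltnn in k_lt_j.
- move=> no_divisor; apply/negPn/primePn => -[|[d d_range dvd_dj]].
    by rewrite ltnNge j_gt1.
  by have := no_divisor d; rewrite mem_index_iota d_range dvd_dj => /(_ isT).
Qed.

Lemma I_fun_prime (j : nat) : 1 < j -> I_fun j = prime j.
Proof.
move=> j_gt1; rewrite /I_fun div1_add1n prime_sum_dvdn_eq0 //.
congr (nat_of_bool (_ == 0)); apply: eq_big_nat => k /andP[k_gt1 _].
by rewrite divn_gcdn_dvdn // ltnW.
Qed.

Lemma S_fun_prime_pi (i : nat) : S_fun i = prime_pi i.
Proof.
case: i => [|i]; first by rewrite /S_fun big_geq.
rewrite /prime_pi -sum1_count big_mkcond /S_fun /index_iota !big_cons /=.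
rewrite !subSS subn0.
apply: eq_big_seq => j; rewrite mem_iota => /andP[j_gt1 _].
by rewrite I_fun_prime //; case: (prime j).
Qed.

Theorem mainTheorem3 (x i : nat) (hi : 1 <= i) :
  A_fun i x = (if prime_pi i <= x then 1 else 0).
Proof.
rewrite /A_fun div1_add1n divn_eq0 ?addn1 // S_fun_prime_pi.
by rewrite ltnS; case: leqP.
Qed.
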